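(* For every integer $s>2$ and every odd integer $k$ with $1<k<2s$, $F_{s,k}(2s)=0$.
   Context: For an integer $j\ge0$, $\binom{x}{j}=x(x-1)\cdots(x-j+1)/j!$ as a polynomial in $x$, and $\binom{x}{j}=0$ for $j<0$. For integers $s\ge1$, $k\ge1$, the Moser polynomial is $F_{s,k}(x)=\sum_{p=1}^{s}(-1)^{p-1}p^{k-1}\binom{x}{s-p}$. *)

From HB Require Import structures.
From mathcomp Require Import all_boot all_order all_algebra.
Set Implicit Arguments. Unset Strict Implicit. Unset Printing Implicit Defensive.
Import Order.TTheory GRing.Theory Num.Theory.
Local Open Scope ring_scope.

(* binomial polynomial  binom(x, j) = x(x-1)...(x-j+1)/j!  in Q[x], for j : nat
   (the case j < 0 does not arise since we only use it with s - p >= 0). *)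
Definition binom_poly (j : nat) : {poly rat} :=
  (j`!%:R)^-1 *: \prod_(i < j) ('X - (i%:R)%:P).

Definition moser_poly (s k : nat) : {poly rat} :=
  \sum_(1 <= p < s.+1) ((-1) ^+ (p - 1) * (p ^ (k - 1))%:R) *: binom_poly (s - p).

From mathcomp Require Import all_boot all_algebra ring zify.
Import GRing.Theory Num.Theory.
Local Open Scope ring_scope.

Set Implicit Arguments.
Unset Strict Implicit.
Unset Printing Implicit Defensive.

(* The alternating binomial sum [\sum_i (-1)^i 'C(n, i) p(i)] is the n-th
   finite difference of p up to sign, hence vanishes when deg p < n.  Taking
   n = 2s and p = (X - s)^(k-1), which is even about s, the sum folds into
   twice the value of the Moser polynomial at 2s, up to sign. *)

Lemma binom_poly_horner_nat (j n : nat) : (binom_poly j).[n%:R] = 'C(n, j)%:R.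
Proof.
rewrite /binom_poly hornerZ horner_prod.
have [hjn | hnj] := leqP j n; last first.
  by rewrite (bigD1 (Ordinal hnj)) //= hornerXsubC subrr mul0r mulr0 bin_small.
under eq_bigr => i _ do
  rewrite hornerXsubC -natrB ?(leq_trans (ltnW (ltn_ord i)) hjn) //.
rewrite -natr_prod -ffact_prod -bin_ffact natrM mulrC mulfK //.
by rewrite pnatr_eq0 -lt0n fact_gt0.
Qed.

Lemma moser_poly_horner_nat (s k n : nat) :
  (moser_poly s k).[n%:R] =
  \sum_(1 <= p < s.+1) (-1) ^+ (p - 1) * (p ^ (k - 1))%:R * 'C(n, s - p)%:R.
Proof.
rewrite /moser_poly horner_sum; apply: eq_bigr => p _.
by rewrite hornerZ binom_poly_horner_nat.
Qed.

Lemma size_sub_comp_XaddC_lt (R : idomainType) (p : {poly R}) (c : R) :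
  p != 0 -> (size (p - (p \Po ('X + c%:P)))%R < size p)%N.
Proof.
move=> p_neq0.
have size_shift : size (p \Po ('X + c%:P)) = size p.
  by rewrite size_comp_poly2 // size_XaddC.
have lead_shift : lead_coef (p \Po ('X + c%:P)) = lead_coef p.
  by rewrite lead_coef_comp ?size_XaddC // lead_coefXaddC expr1n mulr1.
have sp_gt0 : (0 < size p)%N by rewrite size_poly_gt0.
rewrite -(prednK sp_gt0) ltnS; apply/leq_sizeP => j.
rewrite leq_eqVlt => /orP[/eqP <- | ltj]; rewrite coefB.
  by move: lead_shift; rewrite /lead_coef size_shift => ->; rewrite subrr.
by rewrite !nth_default ?subrr ?size_shift // -(prednK sp_gt0).
Qed.

(* Pascal's rule turns the alternating sum of order n+1 into one of order n
   applied to the forward difference of f. *)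
Lemma sum_alt_binomS (R : comNzRingType) (n : nat) (f : nat -> R) :
  \sum_(0 <= i < n.+2) (-1) ^+ i * 'C(n.+1, i)%:R * f i =
  \sum_(0 <= i < n.+1) (-1) ^+ i * 'C(n, i)%:R * (f i - f i.+1).
Proof.
have top_vanishes : \sum_(0 <= i < n.+2) (-1) ^+ i * 'C(n, i)%:R * f i
                  = \sum_(0 <= i < n.+1) (-1) ^+ i * 'C(n, i)%:R * f i.
  by rewrite big_nat_recr //= bin_small // mulr0 mul0r addr0.
have head_term : f 0 + \sum_(0 <= i < n.+1) (-1) ^+ i.+1 * 'C(n, i.+1)%:R * f i.+1
                = \sum_(0 <= i < n.+2) (-1) ^+ i * 'C(n, i)%:R * f i.
  by rewrite [RHS]big_nat_recl // bin0 expr0 !mul1r.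
rewrite big_nat_recl // bin0 expr0 !mul1r.
under eq_bigr => i _ do rewrite binS natrD mulrDr mulrDl.
rewrite big_split /= addrA head_term top_vanishes.
under [RHS]eq_bigr => i _ do rewrite mulrBr.
rewrite big_split /= sumrN; congr (_ + _); rewrite -sumrN.
by apply: eq_bigr => i _; rewrite exprS mulN1r !mulNr.
Qed.

Lemma sum_alt_binom_horner (R : idomainType) (n : nat) (p : {poly R}) :
  (size p <= n)%N -> \sum_(0 <= i < n.+1) (-1) ^+ i * 'C(n, i)%:R * p.[i%:R] = 0.
Proof.
elim: n p => [|n IHn] p size_p.
  move: size_p; rewrite leqn0 size_poly_eq0 => /eqP ->.
  by rewrite big_nat1 horner0 mulr0.
have [-> | p_neq0] := eqVneq p 0.
  by rewrite big1 // => i _; rewrite horner0 mulr0.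
have size_diff : (size (p - (p \Po ('X + 1%:P)))%R <= n)%N.
  by rewrite -ltnS (leq_trans (size_sub_comp_XaddC_lt 1 p_neq0)).
rewrite sum_alt_binomS -[RHS](IHn _ size_diff); apply: eq_bigr => i _.
by rewrite hornerD hornerN horner_comp hornerD hornerX hornerC -natr1.
Qed.

Lemma big_nat_fold_center (V : nmodType) (s : nat) (f : nat -> V) :
  \sum_(0 <= i < (2 * s).+1) f i =
  f s + \sum_(1 <= p < s.+1) (f (s - p)%N + f (s + p)%N).
Proof.
have lower : \sum_(0 <= i < s) f i = \sum_(1 <= p < s.+1) f (s - p)%N.
  by rewrite big_nat_rev big_add1; apply: eq_big_nat => i _; rewrite add0n.
have upper : \sum_(s.+1 <= i < (2 * s).+1) f i = \sum_(1 <= p < s.+1) f (s + p)%N.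
  rewrite -{1}[s.+1]add1n big_addn.
  have -> : ((2 * s).+1 - s = s.+1)%N by lia.
  by apply: eq_big_nat => p _; rewrite addnC.
rewrite (@big_cat_nat _ _ _ s) /=; [|lia|lia].
rewrite (@big_cat_nat _ _ _ s.+1 s) /=; [|lia|lia].
by rewrite big_nat1 lower upper big_split /= addrCA.
Qed.

Lemma sum_alt_binom_centered_pow (R : comNzRingType) (s e : nat) :
  ~~ odd e -> (0 < e)%N ->
  \sum_(0 <= i < (2 * s).+1) (-1) ^+ i * 'C(2 * s, i)%:R * (i%:R - s%:R) ^+ e =
  ((-1) ^+ s * \sum_(1 <= p < s.+1) (-1) ^+ p * 'C(2 * s, s - p)%:R * p%:R ^+ e
    : R) *+ 2.
Proof.
move=> even_e e_gt0; rewrite big_nat_fold_center subrr expr0n eqn0Ngt e_gt0 mulr0.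
rewrite add0r mulr_sumr -sumrMnl; apply: eq_big_nat => p /andP[_ p_le_s].
have even_pow (x : R) : (- x) ^+ e = x ^+ e.
  by rewrite exprNn -signr_odd (negPf even_e) mul1r.
have sign_sub : (-1) ^+ (s - p) = (-1) ^+ (s + p) :> R.
  by rewrite -signr_odd -[RHS]signr_odd oddB ?oddD.
have binom_sym : 'C(2 * s, s + p) = 'C(2 * s, s - p).
  by rewrite -bin_sub; [congr 'C(_, _) | ]; lia.
have centered_sub : (s - p)%:R - s%:R = - p%:R :> R by rewrite natrB //; ring.
have centered_add : (s + p)%:R - s%:R = p%:R :> R by rewrite natrD; ring.
rewrite sign_sub binom_sym centered_sub centered_add even_pow exprD mulr2n.
by congr (_ + _); ring.
Qed.

Theorem mainTheorem20 (s k : nat) :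
  (2 < s)%N -> odd k -> (1 < k)%N -> (k < 2 * s)%N ->
  (moser_poly s k).[(2 * s)%:R] = 0.
Proof.
move=> _ odd_k k_gt1 k_lt_2s.
have even_e : ~~ odd (k - 1) by rewrite oddB ?odd_k // ltnW.
have e_gt0 : (0 < k - 1)%N by rewrite subn_gt0.
have moser_as_sum : (moser_poly s k).[(2 * s)%:R] =
    - \sum_(1 <= p < s.+1) (-1) ^+ p * 'C(2 * s, s - p)%:R * p%:R ^+ (k - 1).
  rewrite moser_poly_horner_nat -sumrN; apply: eq_big_nat => -[|p] // _.
  by rewrite natrX subSS subn0 exprS; ring.
have size_le : (size (('X - s%:R%:P) ^+ (k - 1) : {poly rat}) <= 2 * s)%N.
  by rewrite size_exp_XsubC; lia.
have := sum_alt_binom_horner size_le.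
under eq_bigr => i _ do rewrite horner_exp hornerXsubC.
rewrite sum_alt_binom_centered_pow // moser_as_sum.
by move/eqP; rewrite mulrn_eq0 /= mulf_eq0 signr_eq0 /= => /eqP ->; rewrite oppr0.
Qed.
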